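(* Let $M$ be a combinatorial $3$-manifold and $S$ a slicing of $M$ which is a weakly neighborly polyhedral map. Then $S$ is combinatorially isomorphic to one of the following: the boundary of the $3$-simplex; the boundary of the triangular prism $\Delta^1\times\Delta^2$ (6 vertices, 2 triangles, 3 quadrilaterals); or the $3\times 3$-grid torus (the quadrangulated torus with vertex set $\mathbb{Z}_3\times\mathbb{Z}_3$ and the nine quadrilaterals $\{(i,j),(i+1,j),(i+1,j+1),(i,j+1)\}$, $i,j\in\mathbb{Z}_3$).
   Context: A combinatorial $3$-manifold is a finite pure $3$-dimensional simplicial complex in which the link of every vertex is a combinatorial $2$-sphere. A function $f:M\to\mathbb{R}$ is regular simplexwise linear (rsl) if it is linear on every simplex and takes pairwise distinct values on the vertices. A slicing of $M$ is a level set $f^{-1}(x)$ of an rsl-function $f$ at a value $x$ not equal to $f(v)$ for any vertex $v$; it is a polyhedral surface whose facets are triangles and quadrilaterals, obtained by intersecting $f^{-1}(x)$ with the tetrahedra of $M$. A polyhedral map is weakly neighborly if any two of its vertices lie in a common face. *)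

From HB Require Import structures.
From mathcomp Require Import all_boot all_order all_algebra.
From mathcomp Require Import reals.
Set Implicit Arguments. Unset Strict Implicit. Unset Printing Implicit Defensive.
Import Order.TTheory GRing.Theory Num.Theory.

(* Polyhedral complexes of dimension 2.  A face is represented by the set  *)
(* of its edges, an edge being a 2-element set of vertices; a complex is a *)
(* finite set of faces.  This records the full face lattice.               *)
Section Complexes.
Variable W : finType.

Definition fverts (F : {set {set W}}) : {set W} := \bigcup_(e in F) e.
Definition verts (P : {set {set {set W}}}) : {set W} :=
  \bigcup_(F in P) fverts F.
Definition edges (P : {set {set {set W}}}) : {set {set W}} :=
  \bigcup_(F in P) F.

Definition connected_on (T : finType) (A : {set T}) (r : rel T) : Prop :=
  forall a b, a \in A -> b \in A ->
    connect (fun u v => [&& u \in A, v \in A & r u v]) a b.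

Definition surface (P : {set {set {set W}}}) : Prop :=
  P != set0 /\
  [/\
      (forall F, F \in P -> forall e, e \in F -> #|e| = 2),
      (forall F, F \in P ->
        [/\ 3 <= #|fverts F|,
            (forall v, v \in fverts F -> #|[set e in F | v \in e]| = 2)
          & connected_on (fverts F) (fun a b => [set a; b] \in F)]),
      (forall e, e \in edges P -> #|[set F in P | e \in F]| = 2),
      (* the link of each vertex is a single cycle: the faces around w are
         connected through edges incident with w *)
      (forall w, w \in verts P ->
        connected_on [set F in P | w \in fverts F]
          (fun F G => [exists u, [set w; u] \in F :&: G]))
    &
      connected_on (verts P) (fun a b => [set a; b] \in edges P)].

Definition polyhedral_map (P : {set {set {set W}}}) : Prop :=
  surface P /\
  forall F G, F \in P -> G \in P -> F != G ->
    #|fverts F :&: fverts G| <= 1 \/ (fverts F :&: fverts G) \in F :&: G.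

Definition weakly_neighborly (P : {set {set {set W}}}) : Prop :=
  forall u v, u \in verts P -> v \in verts P ->
    exists2 F, F \in P & (u \in fverts F) && (v \in fverts F).

Definition cycle_face (s : seq W) : {set {set W}} :=
  [set [set p.1; p.2] | p in zip s (rot 1 s)].

End Complexes.

Definition comb_iso (W W' : finType) (P : {set {set {set W}}})
    (Q : {set {set {set W'}}}) : Prop :=
  exists phi : W -> W',
    {in verts P &, injective phi} /\
    [set [set phi @: e | e : {set W} in F] | F : {set {set W}} in P] = Q.

Section Simplicial.
Variable V : finType.

Definition tri_complex (T : {set {set V}}) : {set {set {set V}}} :=
  [set [set [set a; b] | a : V in t, b : V in t & a != b] | t : {set V} in T].

Definition comb_2sphere (T : {set {set V}}) : Prop :=
  [/\ (forall t, t \in T -> #|t| = 3),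
      surface (tri_complex T)
    & (#|verts (tri_complex T)| + #|T| = #|edges (tri_complex T)| + 2)%N].

Definition vlink (K : {set {set V}}) (v : V) : {set {set V}} :=
  [set t :\ v | t : {set V} in K & v \in t].

Definition comb_3manifold (K : {set {set V}}) : Prop :=
  [/\ K != set0,
      (forall t, t \in K -> #|t| = 4)
    & forall v t, t \in K -> v \in t -> comb_2sphere (vlink K v)].

(* Slicings.  An rsl-function is determined by its (pairwise distinct)     *)
(* vertex values f : V -> R.  The level set f^-1(x) has one vertex on each *)
(* edge {u,v} of M with f u < x < f v, and one facet for each tetrahedron  *)
(* met by the level; two such vertices are joined by an edge of the        *)
(* slicing iff they lie in a common tetrahedron and the corresponding      *)
(* edges of M share a vertex.                                              *)
Variable R : realType.

Definition rsl (f : V -> R) : Prop := injective f.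

Definition crossing (f : V -> R) (x : R) (e : {set V}) : bool :=
  [exists u, exists v, (e == [set u; v]) && (f u < x < f v)%R].

Definition slice_face (f : V -> R) (x : R) (t : {set V}) : {set {set {set V}}} :=
  [set [set e1; e2] | e1 in [set: {set V}], e2 in [set: {set V}] &
     [&& crossing f x e1, crossing f x e2, e1 != e2,
         e1 \subset t, e2 \subset t & e1 :&: e2 != set0]].

Definition slicing (K : {set {set V}}) (f : V -> R) (x : R)
  : {set {set {set {set V}}}} :=
  [set slice_face f x t | t : {set V} in K & slice_face f x t != set0].

End Simplicial.

Definition o4 (n : nat) : 'I_4 := inord n.
Definition o6 (n : nat) : 'I_6 := inord n.

Definition tetra_boundary : {set {set {set 'I_4}}} :=
  [set F in map (@cycle_face _)
    [:: [:: o4 0; o4 1; o4 2]; [:: o4 0; o4 1; o4 3];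
        [:: o4 0; o4 2; o4 3]; [:: o4 1; o4 2; o4 3]]].

Definition prism_boundary : {set {set {set 'I_6}}} :=
  [set F in map (@cycle_face _)
    [:: [:: o6 0; o6 1; o6 2]; [:: o6 3; o6 4; o6 5];
        [:: o6 0; o6 1; o6 4; o6 3]; [:: o6 1; o6 2; o6 5; o6 4];
        [:: o6 2; o6 0; o6 3; o6 5]]].

Definition grid_torus : {set {set {set ('I_3 * 'I_3)}}} :=
  [set cycle_face [:: (i, j); (ordS i, j); (ordS i, ordS j); (i, ordS j)]
   | i : 'I_3, j : 'I_3].

From HB Require Import structures.
From mathcomp Require Import all_boot all_order all_algebra.
From mathcomp Require Import reals.
From mathcomp Require Import zify.
Import Order.TTheory GRing.Theory Num.Theory.
Set Implicit Arguments. Unset Strict Implicit. Unset Printing Implicit Defensive.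

(* The vertices of the slicing are the edges uv of M with f u < x < f v, i.e.
   pairs (u, v) of a low end u in B and a high end v in A, and the facet cut out
   of a tetrahedron with low part X and high part Y is the rook graph on X x Y:
   a triangle if #|X| or #|Y| is 1, a square if #|X| = #|Y| = 2.  Weak
   neighborliness makes every pair of B x A a vertex and every 2 x 2 rook
   square a facet.  As an edge lies in exactly two facets, #|B| and #|A| are at
   most 3, while #|B| + #|A| >= 5.  Replacing f by -f we may assume
   #|B| <= #|A|.  If #|B| = 1, the link of the low end is a 2-neighborly
   2-sphere on A, so #|A| = 4 by Euler's formula and S is the boundary of the
   tetrahedron; otherwise (#|B|, #|A|) is (2, 3), the prism, or (3, 3), where
   no triangle can occur and S is the 3 x 3 grid torus. *)

Lemma other_elem (T : finType) (A : {set T}) a :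
  1 < #|A| -> exists2 a', a' \in A & a' != a.
Proof.
case/card_gt1P=> c [d [Hc Hd ncd]].
by case: (eqVneq c a) => [Eca|]; [exists d => //; rewrite -Eca eq_sym | exists c].
Qed.

(** * Rook faces *)

(* The edges of the rook graph K_X x K_Y (two cells are adjacent when they
   share exactly one coordinate), the cell (a, b) being labelled [h a b].
   For #|X| + #|Y| = 4 this is a triangle or a square. *)
Definition rook_face (T1 T2 W : finType) (h : T1 -> T2 -> W)
    (X : {set T1}) (Y : {set T2}) : {set {set W}} :=
  [set E | [exists a1 in X, exists b1 in Y, exists a2 in X, exists b2 in Y,
     ((a1 == a2) (+) (b1 == b2)) && (E == [set h a1 b1; h a2 b2])]].

Section RookFace.
Variables (T1 T2 W : finType).
Implicit Types (h : T1 -> T2 -> W) (X : {set T1}) (Y : {set T2}).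

Lemma rook_faceP h X Y E :
  reflect (exists a1 b1 a2 b2, [/\ a1 \in X, b1 \in Y, a2 \in X, b2 \in Y &
             ((a1 == a2) (+) (b1 == b2)) /\ E = [set h a1 b1; h a2 b2]])
          (E \in rook_face h X Y).
Proof.
rewrite inE; apply: (iffP idP).
  case/exists_inP=> a1 Ha1 /exists_inP[b1 Hb1 /exists_inP[a2 Ha2 /exists_inP[b2 Hb2]]].
  by case/andP=> Hx /eqP ->; exists a1, b1, a2, b2.
case=> a1 [b1 [a2 [b2 [Ha1 Hb1 Ha2 Hb2 [Hx ->]]]]].
apply/exists_inP; exists a1 => //; apply/exists_inP; exists b1 => //.
apply/exists_inP; exists a2 => //; apply/exists_inP; exists b2 => //.
by rewrite Hx eqxx.
Qed.

Lemma mem_rook_face h X Y a1 b1 a2 b2 :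
  a1 \in X -> b1 \in Y -> a2 \in X -> b2 \in Y -> (a1 == a2) (+) (b1 == b2) ->
  [set h a1 b1; h a2 b2] \in rook_face h X Y.
Proof. by move=> *; apply/rook_faceP; exists a1, b1, a2, b2. Qed.

Lemma eq_in_rook_face h1 h2 X Y :
  {in X & Y, forall a b, h1 a b = h2 a b} -> rook_face h1 X Y = rook_face h2 X Y.
Proof.
move=> Eh; apply/setP=> E; apply/rook_faceP/rook_faceP;
  case=> a1 [b1 [a2 [b2 [Ha1 Hb1 Ha2 Hb2 [Hx ->]]]]];
  by exists a1, b1, a2, b2; rewrite ?Eh // -?Eh.
Qed.

Lemma fverts_rook_faceP h X Y e : e \in fverts (rook_face h X Y) ->
  exists a b, [/\ a \in X, b \in Y & e = h a b].
Proof.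
case/bigcupP=> E /rook_faceP[a1 [b1 [a2 [b2 [Ha1 Hb1 Ha2 Hb2 [_ ->]]]]]].
by case/set2P=> ->; [exists a1, b1 | exists a2, b2].
Qed.

Lemma mem_fverts_rook_face h X Y a b : a \in X -> b \in Y -> 3 <= #|X| + #|Y| ->
  h a b \in fverts (rook_face h X Y).
Proof.
move=> Ha Hb XY3; have : (1 < #|X|) || (1 < #|Y|) by lia.
case/orP=> [/(other_elem a)[a' Ha' na] | /(other_elem b)[b' Hb' nb]].
  apply/bigcupP; exists [set h a b; h a' b]; last exact: set21.
  by apply: mem_rook_face => //; rewrite eqxx eq_sym (negbTE na).
apply/bigcupP; exists [set h a b; h a b']; last exact: set21.
by apply: mem_rook_face => //; rewrite eqxx eq_sym (negbTE nb).
Qed.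

Lemma rook_face_neq0 h X Y : rook_face h X Y != set0 ->
  [/\ X != set0, Y != set0 & 3 <= #|X| + #|Y|].
Proof.
case/set0Pn=> E /rook_faceP[a1 [b1 [a2 [b2 [Ha1 Hb1 Ha2 Hb2 [Hx _]]]]]].
split; [by apply/set0Pn; exists a1 | by apply/set0Pn; exists b1 |].
have X1 : 0 < #|X| by apply/card_gt0P; exists a1.
have Y1 : 0 < #|Y| by apply/card_gt0P; exists b1.
case: (eqVneq a1 a2) Hx => [_ /= nb | na _].
  have : 1 < #|Y| by apply/card_gt1P; exists b1, b2.
  lia.
have : 1 < #|X| by apply/card_gt1P; exists a1, a2.
lia.
Qed.

Lemma rook_face_line h a b1 b2 b3 : b1 != b2 -> b2 != b3 -> b1 != b3 ->
  rook_face h [set a] [set b1; b2; b3] = cycle_face [:: h a b1; h a b2; h a b3].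
Proof.
move=> n12 n23 n13; apply/setP=> E; rewrite /cycle_face /=.
apply/rook_faceP/imsetP.
  case=> a1 [c1 [a2 [c2 [/set1P-> Hc1 /set1P-> Hc2 [Hx ->]]]]].
  rewrite eqxx /= in Hx.
  move: Hc1 Hc2 Hx => /setUP[/set2P[]|/set1P]-> /setUP[/set2P[]|/set1P]->;
    rewrite ?eqxx ?(negbTE n12) ?(negbTE n23) ?(negbTE n13) // => _;
    first [ by exists (h a b1, h a b2); rewrite /= ?inE ?eqxx ?orbT // setUC
          | by exists (h a b2, h a b3); rewrite /= ?inE ?eqxx ?orbT // setUC
          | by exists (h a b3, h a b1); rewrite /= ?inE ?eqxx ?orbT // setUC ].
case=> p; rewrite !inE => /or3P[] /eqP-> ->.
- by exists a, b1, a, b2; rewrite !inE !eqxx ?orbT (negbTE n12).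
- by exists a, b2, a, b3; rewrite !inE !eqxx ?orbT (negbTE n23).
- by exists a, b3, a, b1; rewrite !inE !eqxx ?orbT (eq_sym b3) (negbTE n13).
Qed.

End RookFace.

Lemma rook_faceC (T1 T2 W : finType) (h : T1 -> T2 -> W) X Y :
  rook_face h X Y = rook_face (fun b a => h a b) Y X.
Proof.
apply/setP=> E; apply/rook_faceP/rook_faceP;
  case=> a1 [b1 [a2 [b2 [Ha1 Hb1 Ha2 Hb2 [Hx ->]]]]];
  by exists b1, a1, b2, a2; rewrite addbC.
Qed.


Lemma rook_face_square (T1 T2 W : finType) (h : T1 -> T2 -> W) a1 a2 b1 b2 :
  a1 != a2 -> b1 != b2 ->
  rook_face h [set a1; a2] [set b1; b2] =
  cycle_face [:: h a1 b1; h a1 b2; h a2 b2; h a2 b1].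
Proof.
move=> na nb; apply/setP=> E; rewrite /cycle_face /=.
apply/rook_faceP/imsetP.
  case=> c1 [d1 [c2 [d2 [/set2P[]-> /set2P[]-> /set2P[]-> /set2P[]-> [Hx ->]]]]];
    move: Hx; rewrite ?eqxx ?(negbTE na) ?(negbTE nb) ?(eq_sym a2) ?(eq_sym b2)
      ?(negbTE na) ?(negbTE nb) // => _;
    first [ by exists (h a1 b1, h a1 b2); rewrite /= ?inE ?eqxx ?orbT // setUC
          | by exists (h a1 b2, h a2 b2); rewrite /= ?inE ?eqxx ?orbT // setUC
          | by exists (h a2 b2, h a2 b1); rewrite /= ?inE ?eqxx ?orbT // setUC
          | by exists (h a2 b1, h a1 b1); rewrite /= ?inE ?eqxx ?orbT // setUC ].
case=> p; rewrite !inE => /or4P[] /eqP-> ->.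
- by exists a1, b1, a1, b2; rewrite !inE !eqxx ?orbT (negbTE nb).
- by exists a1, b2, a2, b2; rewrite !inE !eqxx ?orbT (negbTE na).
- by exists a2, b2, a2, b1; rewrite !inE !eqxx ?orbT (eq_sym b2) (negbTE nb).
- by exists a2, b1, a1, b1; rewrite !inE !eqxx ?orbT (eq_sym a2) (negbTE na).
Qed.

Lemma imset_rook_face (T1 T2 W W' : finType) (phi : W -> W') (h : T1 -> T2 -> W) X Y :
  [set phi @: e | e : {set W} in rook_face h X Y] = rook_face (fun a b => phi (h a b)) X Y.
Proof.
apply/setP=> E; apply/imsetP/rook_faceP.
  case=> e /rook_faceP[a1 [b1 [a2 [b2 [Ha1 Hb1 Ha2 Hb2 [Hx ->]]]]]] ->.
  by exists a1, b1, a2, b2; rewrite imsetU1 imset_set1.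
case=> a1 [b1 [a2 [b2 [Ha1 Hb1 Ha2 Hb2 [Hx ->]]]]].
exists [set h a1 b1; h a2 b2]; first exact: mem_rook_face.
by rewrite imsetU1 imset_set1.
Qed.

Lemma rook_face_comp (T1 T2 U1 U2 W : finType) (h : U1 -> U2 -> W)
    (g1 : T1 -> U1) (g2 : T2 -> U2) (X : {set T1}) (Y : {set T2}) :
  {in X &, injective g1} -> {in Y &, injective g2} ->
  rook_face (fun a b => h (g1 a) (g2 b)) X Y = rook_face h (g1 @: X) (g2 @: Y).
Proof.
move=> inj1 inj2; apply/setP=> E; apply/rook_faceP/rook_faceP.
  case=> a1 [b1 [a2 [b2 [Ha1 Hb1 Ha2 Hb2 [Hx ->]]]]].
  exists (g1 a1), (g2 b1), (g1 a2), (g2 b2); rewrite !imset_f //.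
  by rewrite (inj_in_eq inj1) // (inj_in_eq inj2).
case=> a1 [b1 [a2 [b2 [/imsetP[c1 Hc1 ->] /imsetP[d1 Hd1 ->]
  /imsetP[c2 Hc2 ->] /imsetP[d2 Hd2 ->] [Hx ->]]]]].
exists c1, d1, c2, d2; split=> //.
by rewrite -(inj_in_eq inj1) // -(inj_in_eq inj2).
Qed.

Lemma sum_card_faces (W : finType) (P : {set {set {set W}}}) :
  \sum_(F in P) #|F| = \sum_(e in edges P) #|[set F in P | e \in F]|.
Proof.
under eq_bigr => F _ do rewrite -sum1_card.
rewrite (exchange_big_dep (mem (edges P))) /=; last first.
  by move=> F e FP eF; apply/bigcupP; exists F.
by apply: eq_bigr => e _; rewrite sum1dep_card.
Qed.

Lemma subset_card_eq (T : finType) (A B : {set T}) :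
  A \subset B -> #|B| <= #|A| -> A = B.
Proof. by move=> sAB cBA; apply/eqP; rewrite eqEcard sAB cBA. Qed.

Lemma set2_eq (T : finType) (a b c d : T) : [set a; b] = [set c; d] ->
  (a = c /\ b = d) \/ (a = d /\ b = c).
Proof.
move=> E.
have /set2P Ha : a \in [set c; d] by rewrite -E set21.
have /set2P Hb : b \in [set c; d] by rewrite -E set22.
have /set2P Hc : c \in [set a; b] by rewrite E set21.
have /set2P Hd : d \in [set a; b] by rewrite E set22.
by case: Ha Hb Hc Hd => -> [] -> [] ? [] ?; subst; by [left | right].
Qed.

Section TriFace.
Variable V : finType.
Implicit Type t : {set V}.

Definition tri_face (t : {set V}) : {set {set V}} :=
  [set [set a; b] | a : V in t, b : V in t & a != b].

Lemma tri_complexE (T : {set {set V}}) : tri_complex T = [set tri_face t | t in T].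
Proof. by []. Qed.

Lemma tri_faceE t : tri_face t = [set e : {set V} | e \subset t & #|e| == 2].
Proof.
apply/setP=> e; rewrite inE; apply/imset2P/idP.
  case=> a b Ha; rewrite inE => /andP[Hb nab] ->.
  by rewrite cards2 nab andbT; apply/subsetP=> w /set2P[] ->.
case/andP=> se /cards2P[a [b [nab Ee]]].
have Ha : a \in t by apply: (subsetP se); rewrite Ee set21.
have Hb : b \in t by apply: (subsetP se); rewrite Ee set22.
by exists a b => //; rewrite inE Hb.
Qed.

Lemma card_tri_face t : #|t| = 3 -> #|tri_face t| = 3.
Proof. by move=> t3; rewrite tri_faceE cards_draws t3. Qed.

Lemma fverts_tri_face t : 2 <= #|t| -> fverts (tri_face t) = t.
Proof.
move=> t2; apply/setP=> a; apply/bigcupP/idP.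
  by case=> e; rewrite tri_faceE inE => /andP[/subsetP se _] /se.
move=> Ha; have [b Hb nba] := other_elem a t2.
exists [set a; b]; last exact: set21.
rewrite tri_faceE inE cards2 (eq_sym a b) nba andbT.
by apply/subsetP=> w /set2P[] ->.
Qed.

End TriFace.

(* A numbering of [Z] by ordinals of the prescribed size, meaningful when
   [#|Z| = p.+1]. *)
Definition set_rank (V : finType) p (Z : {set V}) (w : V) : 'I_p.+1 :=
  inord (index w (enum Z)).

Section SetRank.
Variables (V : finType) (p : nat) (Z : {set V}).
Hypothesis cardZ : #|Z| = p.+1.

Lemma set_rank_val w : w \in Z -> nat_of_ord (set_rank p Z w) = index w (enum Z).
Proof. by move=> wZ; rewrite inordK // -cardZ cardE index_mem mem_enum. Qed.

Lemma set_rank_inj : {in Z &, injective (set_rank p Z)}.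
Proof.
move=> a b Ha Hb /(congr1 val) /=; rewrite !set_rank_val // => Eab.
by rewrite -(nth_index a (_ : a \in enum Z)) ?mem_enum // Eab nth_index ?mem_enum.
Qed.

Lemma set_rank_preimage (X : {set 'I_p.+1}) :
  set_rank p Z @: [set w in Z | set_rank p Z w \in X] = X.
Proof.
apply/setP=> k; apply/imsetP/idP; first by case=> w /setIdP[_ Hw] ->.
have [w0 _] : exists w0, w0 \in Z by apply/set0Pn; rewrite -card_gt0 cardZ.
have ks : k < size (enum Z) by rewrite -cardE cardZ ltn_ord.
have wZ : nth w0 (enum Z) k \in Z by rewrite -mem_enum mem_nth.
move=> Hk; exists (nth w0 (enum Z) k); last first.
  by apply: val_inj; rewrite /= set_rank_val // index_uniq ?enum_uniq.
rewrite inE wZ (_ : set_rank _ _ _ = k) //.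
by apply: val_inj; rewrite /= set_rank_val // index_uniq ?enum_uniq.
Qed.

Lemma card_set_rank (X : {set V}) : X \subset Z -> #|set_rank p Z @: X| = #|X|.
Proof.
move=> /subsetP sXZ; apply: card_in_imset => a b /sXZ Ha /sXZ Hb.
exact: set_rank_inj.
Qed.

End SetRank.

(** * Slicings *)

(* The vertex of a slicing on the edge uv of M is represented by that edge. *)
Definition level_point {V : finType} (u v : V) : {set V} := [set u; v].

Lemma rook_face_levelC (V : finType) (X Y : {set V}) :
  rook_face level_point X Y = rook_face level_point Y X.
Proof.
by rewrite rook_faceC; apply: eq_in_rook_face => a b _ _; rewrite /level_point setUC.
Qed.

Section Slicing.
Variables (R : realType) (V : finType) (K : {set {set V}}) (f : V -> R) (x : R).
Hypothesis fNx : forall v, f v != x.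

Local Notation S := (slicing K f x).
Implicit Types (X Y : {set V}) (t : {set V}).

Definition below := [set w | (f w < x)%R].
Definition above := [set w | (x < f w)%R].

Lemma below_or_above w : (w \in below) || (w \in above).
Proof. by rewrite !inE lt_total // fNx. Qed.

Lemma below_aboveF w : w \in below -> w \in above -> False.
Proof. by rewrite !inE => lo hi; have := lt_trans lo hi; rewrite ltxx. Qed.

Lemma aboveNbelow w : (w \in above) = (w \notin below).
Proof.
case: (boolP (w \in below)) => [lo | /negbTE nlo]; last first.
  by have := below_or_above w; rewrite nlo.
by apply/negbTE/negP/(below_aboveF lo).
Qed.

Lemma below_above_neq u v : u \in below -> v \in above -> u != v.
Proof. by move=> lo hi; apply/eqP=> Euv; subst v; apply: below_aboveF lo hi. Qed.

Lemma level_point_inj u v u' v' :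
  u \in below -> v \in above -> u' \in below -> v' \in above ->
  level_point u v = level_point u' v' -> u = u' /\ v = v'.
Proof.
move=> lo hi lo' hi' /set2_eq[] // [Eu Ev]; subst u' v'.
by case: (below_aboveF lo hi').
Qed.

Lemma crossingP e : reflect (exists u v, [/\ e = level_point u v, u \in below & v \in above])
  (crossing f x e).
Proof.
apply: (iffP existsP).
  by case=> u /existsP[v /andP[/eqP -> /andP[lo hi]]]; exists u, v; rewrite !inE lo hi.
case=> u [v [-> lo hi]]; exists u; apply/existsP; exists v.
by rewrite !inE in lo hi; rewrite eqxx lo hi.
Qed.

Lemma card_below_above t : #|t :&: below| + #|t :&: above| = #|t|.
Proof.
rewrite -(cardsID below t); congr (_ + _); apply: eq_card => w.
by rewrite in_setI in_setD aboveNbelow andbC.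
Qed.

Lemma slice_faceE t : slice_face f x t = rook_face level_point (t :&: below) (t :&: above).
Proof.
have subt a b : [set a; b] \subset t = (a \in t) && (b \in t).
  by apply/subsetP/andP=> [st | [ta tb] w /set2P[]->]; rewrite ?st ?set21 ?set22.
apply/setP=> E; apply/imset2P/rook_faceP.
  case=> e1 e2 _; rewrite !inE /= => /andP[/crossingP[u1 [v1 [-> lo1 hi1]]]].
  case/and5P=> /crossingP[u2 [v2 [-> lo2 hi2]]] ne12.
  rewrite !subt => /andP[u1t v1t] /andP[u2t v2t] meet ->.
  exists u1, v1, u2, v2; rewrite !in_setI u1t v1t u2t v2t lo1 lo2 hi1 hi2; split=> //.
  split=> //; case: (eqVneq u1 u2) ne12 meet => [<-|nu]; case: (eqVneq v1 v2) => [<-|nv] //=.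
    by rewrite eqxx.
  move=> _; case/set0Pn=> w /setIP[/set2P[]-> /set2P[] Ew].
  - by rewrite Ew eqxx in nu.
  - by subst u1; case: (below_aboveF lo1 hi2).
  - by subst v1; case: (below_aboveF lo2 hi1).
  - by rewrite Ew eqxx in nv.
case=> a1 [b1 [a2 [b2 [/setIP[a1t lo1] /setIP[b1t hi1] /setIP[a2t lo2] /setIP[b2t hi2]]]]].
case=> xab ->.
exists (level_point a1 b1) (level_point a2 b2) => //.
rewrite !inE /=; apply/andP; split; first by apply/crossingP; exists a1, b1.
apply/and5P; split; rewrite ?subt ?a1t ?b1t ?a2t ?b2t //.
- by apply/crossingP; exists a2, b2.
- apply: contraTneq xab => /(level_point_inj lo1 hi1 lo2 hi2)[-> ->]; by rewrite !eqxx.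
apply/set0Pn; case: (eqVneq a1 a2) xab => [<- _|_ /= /eqP <-].
  by exists a1; rewrite !inE eqxx.
by exists b1; rewrite !inE eqxx !orbT.
Qed.

Section LevelFaces.
Variables (X Y : {set V}).
Hypotheses (Xlo : X \subset below) (Yhi : Y \subset above).

Lemma mem_fverts_level u v : u \in below -> v \in above ->
  level_point u v \in fverts (rook_face level_point X Y) -> u \in X /\ v \in Y.
Proof.
move=> lo hi /fverts_rook_faceP[a [b [Xa Yb]]].
by case/(level_point_inj lo hi (subsetP Xlo _ Xa) (subsetP Yhi _ Yb)) => -> ->.
Qed.

Lemma edge_rook_face_level u v1 v2 : u \in below -> v1 \in above -> v2 \in above ->
  v1 != v2 -> ([set level_point u v1; level_point u v2] \in rook_face level_point X Y)
              = [&& u \in X, v1 \in Y & v2 \in Y].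
Proof.
move=> lo hi1 hi2 nv; apply/idP/idP; last first.
  by case/and3P=> Xu Yv1 Yv2; apply: mem_rook_face; rewrite ?eqxx ?(negbTE nv).
case/rook_faceP=> a1 [b1 [a2 [b2 [Xa1 Yb1 Xa2 Yb2 [_ /set2_eq[[E1 E2]|[E1 E2]]]]]]].
  case: (level_point_inj lo hi1 (subsetP Xlo _ Xa1) (subsetP Yhi _ Yb1) E1) => -> ->.
  case: (level_point_inj lo hi2 (subsetP Xlo _ Xa2) (subsetP Yhi _ Yb2) E2) => _ ->.
  exact/and3P.
case: (level_point_inj lo hi1 (subsetP Xlo _ Xa2) (subsetP Yhi _ Yb2) E1) => -> ->.
case: (level_point_inj lo hi2 (subsetP Xlo _ Xa1) (subsetP Yhi _ Yb1) E2) => _ ->.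
exact/and3P.
Qed.

End LevelFaces.

Lemma rook_face_level_subset X Y X' Y' :
  X \subset below -> Y \subset above -> X' \subset below -> Y' \subset above ->
  rook_face level_point X Y != set0 ->
  rook_face level_point X Y = rook_face level_point X' Y' -> X \subset X' /\ Y \subset Y'.
Proof.
move=> Xlo Yhi Xlo' Yhi' /rook_face_neq0[/set0Pn[u Xu] /set0Pn[v Yv] XY3] EXY.
have lo := subsetP Xlo _ Xu; have hi := subsetP Yhi _ Yv.
split; apply/subsetP.
  move=> a Xa; have := mem_fverts_rook_face level_point Xa Yv XY3.
  by rewrite EXY => /(mem_fverts_level Xlo' Yhi' (subsetP Xlo _ Xa) hi)[].
move=> b Yb; have := mem_fverts_rook_face level_point Xu Yb XY3.
by rewrite EXY => /(mem_fverts_level Xlo' Yhi' lo (subsetP Yhi _ Yb))[].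
Qed.

Lemma rook_face_level_inj X Y X' Y' :
  X \subset below -> Y \subset above -> X' \subset below -> Y' \subset above ->
  rook_face level_point X Y != set0 ->
  rook_face level_point X Y = rook_face level_point X' Y' -> X = X' /\ Y = Y'.
Proof.
move=> Xlo Yhi Xlo' Yhi' XYn EXY.
have [sX sY] := rook_face_level_subset Xlo Yhi Xlo' Yhi' XYn EXY.
have XYn' : rook_face level_point X' Y' != set0 by rewrite -EXY.
have [sX' sY'] := rook_face_level_subset Xlo' Yhi' Xlo Yhi XYn' (esym EXY).
by split; apply/eqP; rewrite eqEsubset ?sX ?sY ?sX' ?sY'.
Qed.

Hypothesis HK : comb_3manifold K.
Hypothesis Spm : polyhedral_map S.
Hypothesis Swn : weakly_neighborly S.

Lemma card_tet t : t \in K -> #|t| = 4.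
Proof. by case: HK => _ + _; apply. Qed.

Lemma slicing_faceP F : F \in S ->
  exists2 t, t \in K & F = rook_face level_point (t :&: below) (t :&: above).
Proof. by case/imsetP=> t /setIdP[tK _] ->; exists t; rewrite // slice_faceE. Qed.

Lemma slicing_face_neq0 F : F \in S -> F != set0.
Proof. by case/imsetP=> t /setIdP[_ +] ->. Qed.

Lemma tet_slicing_face t : t \in K ->
  rook_face level_point (t :&: below) (t :&: above) != set0 ->
  rook_face level_point (t :&: below) (t :&: above) \in S.
Proof. by move=> tK tn; rewrite -slice_faceE; apply: imset_f; rewrite inE tK slice_faceE. Qed.

Lemma tet_level_point t a b : t \in K -> a \in t -> b \in t ->
  a \in below -> b \in above -> level_point a b \in verts S.
Proof.
move=> tK ta tb lo hi.
have XY3 : 3 <= #|t :&: below| + #|t :&: above| by rewrite card_below_above card_tet.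
have ta' : a \in t :&: below by rewrite in_setI ta lo.
have tb' : b \in t :&: above by rewrite in_setI tb hi.
have ab := mem_fverts_rook_face level_point ta' tb' XY3.
apply/bigcupP; exists (rook_face level_point (t :&: below) (t :&: above)) => //.
by apply: tet_slicing_face => //; case/bigcupP: ab => E EP _; apply/set0Pn; exists E.
Qed.

Definition low_ends :=
  [set u | [exists v, [&& level_point u v \in verts S, u \in below & v \in above]]].
Definition high_ends :=
  [set v | [exists u, [&& level_point u v \in verts S, u \in below & v \in above]]].

Lemma low_end_below u : u \in low_ends -> u \in below.
Proof. by rewrite inE => /existsP[v /and3P[]]. Qed.

Lemma high_end_above v : v \in high_ends -> v \in above.
Proof. by rewrite inE => /existsP[u /and3P[]]. Qed.

Lemma sub_low_ends_below X : X \subset low_ends -> X \subset below.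
Proof. by move/subsetP=> sX; apply/subsetP=> w /sX /low_end_below. Qed.

Lemma sub_high_ends_above Y : Y \subset high_ends -> Y \subset above.
Proof. by move/subsetP=> sY; apply/subsetP=> w /sY /high_end_above. Qed.

Lemma ends_level_point u v : level_point u v \in verts S -> u \in below -> v \in above ->
  u \in low_ends /\ v \in high_ends.
Proof.
move=> uvS lo hi.
by split; rewrite inE; apply/existsP; [exists v | exists u]; rewrite uvS lo hi.
Qed.

Lemma verts_slicingP e : e \in verts S ->
  exists u v, [/\ e = level_point u v, u \in low_ends & v \in high_ends].
Proof.
move=> eS; case/bigcupP: (eS) => F /slicing_faceP[t tK ->].
case/fverts_rook_faceP=> a [b [/setIP[_ lo] /setIP[_ hi] Ee]].
by exists a, b; rewrite Ee; rewrite Ee in eS; case: (ends_level_point eS lo hi).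
Qed.

Lemma slicing_face_shape F : F \in S -> exists X Y,
  [/\ F = rook_face level_point X Y, X \subset low_ends, Y \subset high_ends
    & #|X| + #|Y| = 4].
Proof.
move=> FS; have [t tK EF] := slicing_faceP FS.
have := slicing_face_neq0 FS; rewrite EF => /rook_face_neq0[/set0Pn[u0 tu0] /set0Pn[v0 tv0] _].
exists (t :&: below), (t :&: above); rewrite card_below_above card_tet //.
split=> //; apply/subsetP.
  move=> u /setIP[tu lo]; have /setIP[tv0' hi0] := tv0.
  by case: (ends_level_point (tet_level_point tK tu tv0' lo hi0) lo hi0).
move=> v /setIP[tv hi]; have /setIP[tu0' lo0] := tu0.
by case: (ends_level_point (tet_level_point tK tu0' tv lo0 hi) lo0 hi).
Qed.

Lemma slicing_face_card X Y : X \subset low_ends -> Y \subset high_ends ->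
  rook_face level_point X Y \in S -> [/\ X != set0, Y != set0 & #|X| + #|Y| = 4].
Proof.
move=> sX sY FS; have [X0 [Y0 [E sX0 sY0 XY4]]] := slicing_face_shape FS.
have XYn := slicing_face_neq0 FS; have [-> ->] := rook_face_level_inj
  (sub_low_ends_below sX) (sub_high_ends_above sY)
  (sub_low_ends_below sX0) (sub_high_ends_above sY0) XYn E.
by rewrite E in XYn; case/rook_face_neq0: XYn.
Qed.

Lemma slicing_neq0 : S != set0.
Proof. by case: Spm => [[]]. Qed.

Lemma card_faces_edge E : E \in edges S -> #|[set F in S | E \in F]| = 2.
Proof. by case: Spm => [[_ [_ _ + _ _]] _]; apply. Qed.

Lemma level_point_verts u v : u \in low_ends -> v \in high_ends ->
  level_point u v \in verts S.
Proof.
rewrite [u \in _]inE [v \in _]inE.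
move=> /existsP[v' /and3P[uv' lo hi']] /existsP[u' /and3P[u'v lo' hi]].
case: (Swn uv' u'v) => F FS /andP[].
have [t tK ->] := slicing_faceP FS.
move=> /(mem_fverts_level (subsetIr _ _) (subsetIr _ _) lo hi')[/setIP[tu _] _].
move=> /(mem_fverts_level (subsetIr _ _) (subsetIr _ _) lo' hi)[_ /setIP[tv _]].
exact: (tet_level_point tK tu tv lo hi).
Qed.

Lemma common_face u1 u2 v1 v2 : u1 \in low_ends -> u2 \in low_ends ->
    v1 \in high_ends -> v2 \in high_ends ->
  exists X Y, [/\ rook_face level_point X Y \in S, X \subset low_ends, Y \subset high_ends,
    #|X| + #|Y| = 4 & [/\ u1 \in X, u2 \in X, v1 \in Y & v2 \in Y]].
Proof.
move=> B1 B2 A1 A2.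
case: (Swn (level_point_verts B1 A1) (level_point_verts B2 A2)) => F FS /andP[].
have [X [Y [EF sX sY XY4]]] := slicing_face_shape FS; rewrite EF in FS *.
have Xlo := sub_low_ends_below sX; have Yhi := sub_high_ends_above sY.
case/(mem_fverts_level Xlo Yhi (low_end_below B1) (high_end_above A1)) => ? ?.
case/(mem_fverts_level Xlo Yhi (low_end_below B2) (high_end_above A2)) => ? ?.
by exists X, Y.
Qed.

Lemma square_face u1 u2 v1 v2 : u1 \in low_ends -> u2 \in low_ends ->
    v1 \in high_ends -> v2 \in high_ends -> u1 != u2 -> v1 != v2 ->
  rook_face level_point [set u1; u2] [set v1; v2] \in S.
Proof.
move=> B1 B2 A1 A2 nu nv.
have [X [Y [FS _ _ XY4 [X1 X2 Y1 Y2]]]] := common_face B1 B2 A1 A2.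
have sx : [set u1; u2] \subset X by apply/subsetP=> w /set2P[] ->.
have sy : [set v1; v2] \subset Y by apply/subsetP=> w /set2P[] ->.
have := subset_leq_card sx; have := subset_leq_card sy; rewrite !cards2 nu nv /= => cy cx.
rewrite (subset_card_eq sx); last by rewrite cards2 nu; clear -XY4 cy; lia.
by rewrite (subset_card_eq sy) //; rewrite cards2 nv; clear -XY4 cx; lia.
Qed.

Lemma low_ends_neq0 : low_ends != set0.
Proof.
case/set0Pn: slicing_neq0 => F FS; have [X [Y [EF sX _ _]]] := slicing_face_shape FS.
have := slicing_face_neq0 FS; rewrite EF => /rook_face_neq0[/set0Pn[u Xu] _ _].
by apply/set0Pn; exists u; apply: (subsetP sX).
Qed.

Lemma square_face_card X Y : X \subset low_ends -> Y \subset high_ends ->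
  #|X| = 2 -> #|Y| = 2 -> rook_face level_point X Y \in S.
Proof.
move=> sX sY /eqP/cards2P[u1 [u2 [nu EX]]] /eqP/cards2P[v1 [v2 [nv EY]]].
have [B1 B2] : u1 \in low_ends /\ u2 \in low_ends.
  by split; apply: (subsetP sX); rewrite EX ?set21 ?set22.
have [A1 A2] : v1 \in high_ends /\ v2 \in high_ends.
  by split; apply: (subsetP sY); rewrite EY ?set21 ?set22.
by rewrite EX EY square_face.
Qed.

Section EdgeCount.
Variables (u v1 v2 : V).
Hypotheses (Bu : u \in low_ends) (A1 : v1 \in high_ends) (A2 : v2 \in high_ends).
Hypothesis nv : v1 != v2.

Local Notation E := [set level_point u v1; level_point u v2].
Local Notation square u' := (rook_face level_point [set u; u'] [set v1; v2]).

Lemma edge_rook_face X Y : X \subset low_ends -> Y \subset high_ends ->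
  (E \in rook_face level_point X Y) = [&& u \in X, v1 \in Y & v2 \in Y].
Proof.
move=> sX sY; apply: edge_rook_face_level => //.
- exact: sub_low_ends_below.
- exact: sub_high_ends_above.
- exact: low_end_below.
- exact: high_end_above.
- exact: high_end_above.
Qed.

Lemma square_at_edge u' : u' \in low_ends :\ u ->
  [/\ square u' \in [set F in S | E \in F], [set u; u'] \subset low_ends
    & [set v1; v2] \subset high_ends].
Proof.
case/setD1P=> nu Bu'.
have sX : [set u; u'] \subset low_ends by apply/subsetP=> w /set2P[] ->.
have sY : [set v1; v2] \subset high_ends by apply/subsetP=> w /set2P[] ->.
split=> //; apply/setIdP; split; first by rewrite square_face // eq_sym.
by rewrite edge_rook_face // set21 !inE !eqxx orbT.
Qed.

Lemma card_squares_at_edge : #|[set square u' | u' in low_ends :\ u]| = #|low_ends :\ u|.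
Proof.
apply: card_in_imset => a b Ha Hb Eab.
have [/setIdP[aS _] sa sy] := square_at_edge Ha; have [_ sb _] := square_at_edge Hb.
have [Xab _] := rook_face_level_inj (sub_low_ends_below sa) (sub_high_ends_above sy)
  (sub_low_ends_below sb) (sub_high_ends_above sy) (slicing_face_neq0 aS) Eab.
have : a \in [set u; b] by rewrite -Xab set22.
by case/set2P=> // Eau; move: Ha; rewrite Eau setD11.
Qed.

(* Each [u'] in [low_ends :\ u] gives a square on the edge [E], which lies in
   only two faces. *)
Lemma card_low_ends_edge : #|low_ends :\ u| <= 2.
Proof.
case: (set_0Vmem (low_ends :\ u)) => [->|[u' Hu']]; first by rewrite cards0.
have [/setIdP[Su' Eu'] _ _] := square_at_edge Hu'.
have ES : E \in edges S by apply/bigcupP; exists (square u').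
have sub : [set square w | w in low_ends :\ u] \subset [set F in S | E \in F].
  by apply/subsetP=> F /imsetP[w /square_at_edge[? _ _] ->].
by rewrite -card_squares_at_edge -(card_faces_edge ES) subset_leq_card.
Qed.

Lemma card_low_ends_edge_triangle Y : Y \subset high_ends ->
  rook_face level_point [set u] Y \in S -> v1 \in Y -> v2 \in Y -> #|low_ends :\ u| <= 1.
Proof.
move=> sY TS Y1 Y2.
have sX : [set u] \subset low_ends by rewrite sub1set.
have ET : E \in rook_face level_point [set u] Y by rewrite edge_rook_face // set11 Y1 Y2.
have ES : E \in edges S by apply/bigcupP; exists (rook_face level_point [set u] Y).
have [_ _ XY4] := slicing_face_card sX sY TS.
have notsq : rook_face level_point [set u] Y \notin [set square w | w in low_ends :\ u].
  apply/imsetP=> -[w Hw /(rook_face_level_inj (sub_low_ends_below sX))].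
  have [_ sw sy] := square_at_edge Hw; case/setD1P: Hw => nwu _.
  case/(_ (sub_high_ends_above sY) (sub_low_ends_below sw) (sub_high_ends_above sy)
    (slicing_face_neq0 TS)) => Eu _.
  by have := set22 u w; rewrite -Eu => /set1P/eqP; rewrite (negbTE nwu).
have sub : rook_face level_point [set u] Y |: [set square w | w in low_ends :\ u]
    \subset [set F in S | E \in F].
  rewrite subUset sub1set inE TS ET /=.
  by apply/subsetP=> F /imsetP[w /square_at_edge[? _ _] ->].
by have := subset_leq_card sub; rewrite cardsU1 notsq card_squares_at_edge card_faces_edge.
Qed.

End EdgeCount.

Lemma card_low_ends_triangle u Y : u \in low_ends -> Y \subset high_ends ->
  rook_face level_point [set u] Y \in S -> #|low_ends| <= 2.
Proof.
move=> Bu sY TS.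
have sX : [set u] \subset low_ends by rewrite sub1set.
have [_ _ XY4] := slicing_face_card sX sY TS.
have /card_gt1P[v1 [v2 [Y1 Y2 nv]]] : 1 < #|Y| by rewrite cards1 in XY4; clear -XY4; lia.
have := card_low_ends_edge_triangle Bu (subsetP sY _ Y1) (subsetP sY _ Y2) nv sY TS Y1 Y2.
by rewrite (cardsD1 u low_ends) Bu add1n ltnS.
Qed.

(* Otherwise every face would be [low_ends * high_ends], and an edge would lie
   in a single face. *)
Lemma card_ends_ge5 : 5 <= #|low_ends| + #|high_ends|.
Proof.
case/set0Pn: slicing_neq0 => F FS.
have [X [Y [EF sX sY XY4]]] := slicing_face_shape FS.
rewrite leqNgt; apply/negP => small.
have allF G : G \in S -> G = F.
  move=> GS; have [X' [Y' [EG sX' sY' XY4']]] := slicing_face_shape GS.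
  have cX := subset_leq_card sX; have cY := subset_leq_card sY.
  have cX' := subset_leq_card sX'; have cY' := subset_leq_card sY'.
  have eX : X = low_ends by apply: subset_card_eq sX _; clear -XY4 cY small; lia.
  have eY : Y = high_ends by apply: subset_card_eq sY _; clear -XY4 cX small; lia.
  have eX' : X' = low_ends by apply: subset_card_eq sX' _; clear -XY4' cY' small; lia.
  have eY' : Y' = high_ends by apply: subset_card_eq sY' _; clear -XY4' cX' small; lia.
  by rewrite EG EF eX eY eX' eY'.
case/set0Pn: (slicing_face_neq0 FS) => E EF'.
have ES : E \in edges S by apply/bigcupP; exists F.
have : [set G in S | E \in G] \subset [set F].
  by apply/subsetP=> G /setIdP[/allF -> _]; rewrite set11.
by move/subset_leq_card; rewrite cards1 card_faces_edge.
Qed.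

(* The edge {u v1, u v2} lies in the square [u; u'] * [v1; v2] and in exactly
   one other face, which can only be the triangle [u] * [high_ends]. *)
Lemma prism_triangle u : #|low_ends| = 2 -> #|high_ends| = 3 -> u \in low_ends ->
  rook_face level_point [set u] high_ends \in S.
Proof.
move=> B2 A3 Bu.
have [u' Bu' nu'] : exists2 u', u' \in low_ends & u' != u by apply: other_elem; rewrite B2.
have /card_gt1P[v1 [v2 [A1 A2 nv]]] : 1 < #|high_ends| by rewrite A3.
have Bu'u : u' \in low_ends :\ u by apply/setD1P.
have [/setIdP[QS EQ] sx sy] := square_at_edge Bu A1 A2 nv Bu'u.
have ES : [set level_point u v1; level_point u v2] \in edges S.
  by apply/bigcupP; exists (rook_face level_point [set u; u'] [set v1; v2]).
have := card_faces_edge ES; rewrite (cardsD1 (rook_face level_point [set u; u'] [set v1; v2])).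
rewrite inE QS EQ add1n => -[] /eqP/cards1P[F EF].
have : F \in [set F in S | [set level_point u v1; level_point u v2] \in F]
  :\ rook_face level_point [set u; u'] [set v1; v2] by rewrite EF set11.
case/setD1P=> nFQ /setIdP[FS EFe].
have [X [Y [EFXY sX sY XY4]]] := slicing_face_shape FS.
rewrite EFXY edge_rook_face // in EFe; case/and3P: EFe => uX Y1 Y2.
have cX := subset_leq_card sX; have cY := subset_leq_card sY.
have X0 : 0 < #|X| by rewrite card_gt0; apply/set0Pn; exists u.
case: (eqVneq #|X| 1) => [/eqP/cards1P[w Xw] | X2].
  move: uX; rewrite Xw => /set1P Euw; subst w.
  have eY : Y = high_ends.
    by apply: subset_card_eq sY _; rewrite A3; rewrite Xw cards1 in XY4; clear -XY4; lia.
  by rewrite EFXY Xw eY in FS.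
have eX : X = low_ends by apply: subset_card_eq sX _; rewrite B2; clear -X0 X2; lia.
have eB : [set u; u'] = low_ends.
  by apply: subset_card_eq sx _; rewrite B2 cards2 eq_sym nu'.
have eY : Y = [set v1; v2].
  apply/esym/subset_card_eq; first by apply/subsetP=> w /set2P[]->.
  by rewrite cards2 nv; move: XY4; rewrite eX B2; clear; lia.
by move: nFQ; rewrite EFXY eX eY -eB eqxx.
Qed.

Section OneLowEnd.
Variable u : V.
Hypothesis low_endsE : low_ends = [set u].

Local Notation L := (vlink K u).
Local Notation P := (tri_complex L).

Lemma low_end_u : u \in low_ends.
Proof. by rewrite low_endsE set11. Qed.

Lemma vlinkP t' : t' \in L -> exists t, [/\ t \in K, u \in t & t' = t :\ u].
Proof. by case/imsetP=> t /setIdP[tK ut] ->; exists t. Qed.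

Lemma mem_vlink t : t \in K -> u \in t -> t :\ u \in L.
Proof. by move=> tK ut; apply: imset_f; rewrite inE tK ut. Qed.

Lemma card_tetD1 t : t \in K -> u \in t -> #|t :\ u| = 3.
Proof. by move=> tK ut; move: (card_tet tK); rewrite (cardsD1 u) ut => -[]. Qed.

Lemma exists_high_end : exists v, v \in high_ends.
Proof.
apply/set0Pn; rewrite -card_gt0; have := card_ends_ge5.
by rewrite low_endsE cards1; clear; lia.
Qed.

(* A vertex [b] of a tetrahedron through [u] cannot lie below [x], since then it
   would be a second low end; so [u b] is a vertex of the slicing. *)
Lemma high_end_tet t a b : t \in K -> u \in t -> a \in t :\ u -> b \in t :\ u ->
  a \in high_ends -> b \in high_ends.
Proof.
move=> tK ut /setD1P[_ ta] /setD1P[nbu tb] /high_end_above hi.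
have lo := low_end_below low_end_u.
case/orP: (below_or_above b) => [lo_b | hi_b].
  have [] := ends_level_point (tet_level_point tK tb ta lo_b hi) lo_b hi.
  by rewrite low_endsE => /set1P/eqP; rewrite (negbTE nbu).
by case: (ends_level_point (tet_level_point tK ut tb lo hi_b) lo hi_b).
Qed.

Lemma tetD1_verts_vlink t : t \in K -> u \in t -> t :\ u \subset verts P.
Proof.
move=> tK ut; apply/subsetP=> w wt.
apply/bigcupP; exists (tri_face (t :\ u)); first by rewrite tri_complexE imset_f ?mem_vlink.
by rewrite fverts_tri_face // card_tetD1.
Qed.

Lemma edges_vlinkP e : e \in edges P -> exists t, [/\ t \in K, u \in t & e \subset t :\ u].
Proof.
case/bigcupP=> F; rewrite tri_complexE => /imsetP[t' /vlinkP[t [tK ut ->]] ->].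
by rewrite tri_faceE inE => /andP[se _]; exists t.
Qed.

Lemma level_point_tet v : v \in high_ends ->
  exists t, [/\ t \in K, u \in t & v \in t :\ u].
Proof.
move=> Av; have /bigcupP[F FS Fv] := level_point_verts low_end_u Av.
have [t tK EF] := slicing_faceP FS; rewrite EF in Fv.
have lo := low_end_below low_end_u; have hi := high_end_above Av.
case: (mem_fverts_level (subsetIr _ _) (subsetIr _ _) lo hi Fv) => /setIP[ut _] /setIP[vt _].
by exists t; rewrite !inE vt eq_sym below_above_neq.
Qed.

Lemma vlink_sphere : comb_2sphere L.
Proof.
have [v /level_point_tet[t [tK ut _]]] := exists_high_end.
by case: HK => _ _ /(_ u t tK ut).
Qed.

(* The link is connected and its edges never leave [high_ends], which meets it. *)
Lemma verts_vlink : verts P = high_ends.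
Proof.
have link_high : high_ends \subset verts P.
  apply/subsetP=> v /level_point_tet[t [tK ut vt]].
  exact: (subsetP (tetD1_verts_vlink tK ut)).
apply/eqP; rewrite eqEsubset link_high andbT.
have [_ [_ [_ _ _ _ conn]] _] := vlink_sphere.
have closedA : closed (fun a b => [&& a \in verts P, b \in verts P & [set a; b] \in edges P])
    high_ends.
  move=> a b /and3P[_ _ /edges_vlinkP[t [tK ut /subsetP se]]].
  have ta : a \in t :\ u by rewrite se ?set21.
  have tb : b \in t :\ u by rewrite se ?set22.
  by apply/idP/idP; [apply: high_end_tet ta tb | apply: high_end_tet tb ta].
have [v Av] := exists_high_end.
apply/subsetP=> w Pw.
by rewrite -(closed_connect closedA (conn v w (subsetP link_high _ Av) Pw)).
Qed.

Lemma tetD1_high_ends t : t \in K -> u \in t -> t :\ u \subset high_ends.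
Proof. by rewrite -verts_vlink; exact: tetD1_verts_vlink. Qed.

Lemma edges_vlink : edges P = [set e : {set V} | e \subset high_ends & #|e| == 2].
Proof.
apply/setP=> e; apply/idP/idP.
  move=> Pe; have [t [tK ut se]] := edges_vlinkP Pe.
  rewrite inE (subset_trans se (tetD1_high_ends tK ut)) /=.
  case/bigcupP: Pe => F; rewrite tri_complexE => /imsetP[t' _ ->].
  by rewrite tri_faceE inE => /andP[].
case/setIdP=> se /cards2P[a [b [nab Ee]]].
have Aa : a \in high_ends by rewrite (subsetP se) // Ee set21.
have Ab : b \in high_ends by rewrite (subsetP se) // Ee set22.
case: (Swn (level_point_verts low_end_u Aa) (level_point_verts low_end_u Ab)) => F FS /andP[].
have [t tK ->] := slicing_faceP FS.
have lo := low_end_below low_end_u.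
move=> /(mem_fverts_level (subsetIr _ _) (subsetIr _ _) lo (high_end_above Aa)).
case=> /setIP[ut _] /setIP[ta _].
move=> /(mem_fverts_level (subsetIr _ _) (subsetIr _ _) lo (high_end_above Ab)).
case=> _ /setIP[tb _].
apply/bigcupP; exists (tri_face (t :\ u)); first by rewrite tri_complexE imset_f ?mem_vlink.
rewrite tri_faceE inE Ee cards2 nab andbT.
by apply/subsetP=> w /set2P[]->; rewrite in_setD1 ?ta ?tb andbT eq_sym below_above_neq
  ?high_end_above.
Qed.

Lemma card_tri_complex_vlink : #|P| = #|L|.
Proof.
rewrite tri_complexE; apply: card_in_imset => t1 t2 L1 L2 E12.
have [card3 _ _] := vlink_sphere.
by rewrite -(fverts_tri_face (_ : 2 <= #|t1|)) ?card3 // E12 fverts_tri_face ?card3.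
Qed.

Lemma vlink_faces_edges : #|P| * 3 = #|edges P| * 2.
Proof.
have [card3 [_ [_ _ two _ _]] _] := vlink_sphere.
rewrite -!sum_nat_const.
transitivity (\sum_(F in P) #|F|).
  apply: eq_bigr => F; rewrite tri_complexE => /imsetP[t' Lt' ->].
  by rewrite card_tri_face // card3.
by rewrite sum_card_faces; apply: eq_bigr => e /two.
Qed.

(* Euler's relation n + f = e + 2 for the 2-neighborly sphere on n >= 4 vertices,
   with e = 'C(n, 2) and 3 f = 2 e, forces n = 4. *)
Lemma card_high_ends_one_low : #|high_ends| = 4.
Proof.
have [_ _ euler] := vlink_sphere.
rewrite verts_vlink edges_vlink cards_draws in euler.
have := vlink_faces_edges; rewrite edges_vlink cards_draws card_tri_complex_vlink.
have := mul_bin_diag #|high_ends| 1; rewrite bin1.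
have := card_ends_ge5; rewrite low_endsE cards1.
move: euler; set n := #|high_ends|; set e := 'C(n, 2); set l := #|L|.
clear; nia.
Qed.

Lemma vlink_triangle t' : t' \in L -> rook_face level_point [set u] t' \in S.
Proof.
case/vlinkP=> t [tK ut ->].
have tlo : t :&: below = [set u].
  apply/setP=> w; rewrite in_setI in_set1.
  case: (eqVneq w u) => [->|nwu]; first by rewrite ut (low_end_below low_end_u).
  case: (boolP (w \in t)) => //= wt.
  have /high_end_above : w \in high_ends by rewrite (subsetP (tetD1_high_ends tK ut)) // !inE nwu.
  by rewrite aboveNbelow => /negbTE.
have thi : t :&: above = t :\ u.
  apply/setP=> w; move/setP/(_ w): tlo; rewrite !in_setI in_setD1 in_set1 aboveNbelow.
  by case: (w \in t); rewrite ?andTb ?andbT ?andFb ?andbF // => ->.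
rewrite -thi -tlo; apply: tet_slicing_face => //; rewrite tlo thi.
have /card_gt1P[a [b [ta tb nab]]] : 1 < #|t :\ u| by rewrite card_tetD1.
by apply/set0Pn; exists [set level_point u a; level_point u b]; apply: mem_rook_face;
  rewrite ?set11 ?eqxx.
Qed.

(* [S] lies among the four triangles [u] * Y' with Y' a 3-subset of [high_ends],
   and the four facets of the link give four distinct triangles of [S]. *)
Lemma triangle_one_low Y : Y \subset high_ends -> #|Y| = 3 ->
  rook_face level_point low_ends Y \in S.
Proof.
move=> sY Y3.
pose Z := [set Y' : {set V} | Y' \subset high_ends & #|Y'| == 3].
pose tri := [set rook_face level_point [set u] Y' | Y' in Z].
have S_tri : S \subset tri.
  apply/subsetP=> F FS; have [X [Y' [EF sX sY' XY4]]] := slicing_face_shape FS.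
  have [Xn _ _] := slicing_face_card sX sY' (etrans (congr1 _ (esym EF)) FS).
  have EX : X = [set u].
    by apply/eqP; rewrite eqEcard -low_endsE sX /= low_endsE cards1 card_gt0.
  rewrite EF EX; apply: imset_f; rewrite inE sY' /=.
  by rewrite EX cards1 in XY4; apply/eqP; clear -XY4; lia.
have card_tri : #|tri| <= 4.
  by apply: leq_trans (leq_imset_card _ _) _; rewrite cards_draws card_high_ends_one_low.
have card_L : #|L| <= #|S|.
  rewrite -(@card_in_imset _ _ (fun t' => rook_face level_point [set u] t')); last first.
    move=> t1 t2 L1 L2 /= E12.
    have n1 := slicing_face_neq0 (vlink_triangle L1).
    have [s1 [s1K us1 E1]] := vlinkP L1; have [s2 [s2K us2 E2]] := vlinkP L2.
    have ulo : [set u] \subset below by rewrite sub1set low_end_below ?low_end_u.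
    have t1hi : t1 \subset above by rewrite E1 sub_high_ends_above ?tetD1_high_ends.
    have t2hi : t2 \subset above by rewrite E2 sub_high_ends_above ?tetD1_high_ends.
    by case: (rook_face_level_inj ulo t1hi ulo t2hi n1 E12).
  by apply: subset_leq_card; apply/subsetP=> F /imsetP[t' Lt' ->]; exact: vlink_triangle.
have L4 : #|L| = 4.
  have := vlink_faces_edges.
  rewrite edges_vlink cards_draws card_high_ends_one_low card_tri_complex_vlink.
  by rewrite (_ : 'C(4, 2) = 6) //; clear; lia.
have ES : S = tri.
  by apply: subset_card_eq S_tri _; apply: leq_trans card_tri _; rewrite -L4.
by rewrite ES low_endsE; apply: imset_f; rewrite inE sY Y3 eqxx.
Qed.

End OneLowEnd.

Lemma pick_below u v : u \in below -> v \in above ->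
  [pick w in level_point u v | w \in below] = Some u.
Proof.
move=> lo hi; case: pickP => [w /andP[/set2P[]-> // lo'] | /(_ u)].
  by case: (below_aboveF lo' hi).
by rewrite set21 lo.
Qed.

Lemma pick_above u v : u \in below -> v \in above ->
  [pick w in level_point u v | w \in above] = Some v.
Proof.
move=> lo hi; case: pickP => [w /andP[/set2P[]-> // hi'] | /(_ v)].
  by case: (below_aboveF lo hi').
by rewrite set22 hi.
Qed.

(* Numbering the low and high ends transports the faces of [S], described by
   the sizes of their low and high parts, onto those of [Q]. *)
Lemma comb_iso_slicing (W : finType) p q (h : 'I_p.+1 -> 'I_q.+1 -> W)
    (Q : {set {set {set W}}}) (admissible : nat -> nat -> bool) :
  #|low_ends| = p.+1 -> #|high_ends| = q.+1 ->
  (forall a b a' b', h a b = h a' b' -> a = a' /\ b = b') ->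
  (forall X Y, X \subset low_ends -> Y \subset high_ends ->
     (rook_face level_point X Y \in S) = admissible #|X| #|Y|) ->
  (forall G, G \in Q <-> exists I J, G = rook_face h I J /\ admissible #|I| #|J|) ->
  comb_iso S Q.
Proof.
move=> cB cA h_inj SE QE.
pose rB := set_rank p low_ends; pose rA := set_rank q high_ends.
pose phi (e : {set V}) := h (oapp rB ord0 [pick w in e | w \in below])
                (oapp rA ord0 [pick w in e | w \in above]).
have phiE a b : a \in below -> b \in above -> phi (level_point a b) = h (rB a) (rA b).
  by move=> lo hi; rewrite /phi pick_below // pick_above.
have imgE X Y : X \subset low_ends -> Y \subset high_ends ->
    [set phi @: e | e : {set {set V}} in rook_face level_point X Y]
    = rook_face h (rB @: X) (rA @: Y).
  move=> sX sY; rewrite imset_rook_face.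
  rewrite (@eq_in_rook_face _ _ _ _ (fun a b => h (rB a) (rA b))); last first.
    move=> a b Xa Yb; apply: phiE.
      exact: subsetP (sub_low_ends_below sX) _ Xa.
    exact: subsetP (sub_high_ends_above sY) _ Yb.
  rewrite rook_face_comp //.
    by move=> a b /(subsetP sX) Xa /(subsetP sX) Xb; apply: set_rank_inj.
  by move=> a b /(subsetP sY) Ya /(subsetP sY) Yb; apply: set_rank_inj.
exists phi; split.
  move=> e1 e2 /verts_slicingP[a1 [b1 [-> Ba1 Ab1]]] /verts_slicingP[a2 [b2 [-> Ba2 Ab2]]].
  rewrite !phiE ?low_end_below ?high_end_above // => /h_inj[E1 E2].
  by rewrite (set_rank_inj cB Ba1 Ba2 E1) (set_rank_inj cA Ab1 Ab2 E2).
apply/setP=> G; apply/imsetP/idP.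
  case=> F FS ->; have [X [Y [EF sX sY _]]] := slicing_face_shape FS.
  rewrite EF imgE //; apply/QE; exists (rB @: X), (rA @: Y); split=> //.
  by rewrite !card_set_rank // -SE // -EF.
case/QE=> Xo [Yo [-> adm]].
pose X := [set w in low_ends | rB w \in Xo]; pose Y := [set w in high_ends | rA w \in Yo].
have sX : X \subset low_ends by apply/subsetP=> w /setIdP[].
have sY : Y \subset high_ends by apply/subsetP=> w /setIdP[].
have eX : rB @: X = Xo by apply: set_rank_preimage.
have eY : rA @: Y = Yo by apply: set_rank_preimage.
exists (rook_face level_point X Y); last by rewrite imgE // eX eY.
by rewrite SE // -(card_set_rank cB sX) -(card_set_rank cA sY) eX eY.
Qed.

End Slicing.

Section Opposite.
Variables (R : realType) (V : finType) (K : {set {set V}}) (f : V -> R) (x : R).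

Local Notation f' := (fun v => - f v)%R.

Lemma slicing_opp : slicing K f' (- x)%R = slicing K f x.
Proof.
have crossing_opp : crossing f' (- x)%R =1 crossing f x.
  move=> e; apply/crossingP/crossingP=> -[u [v [-> lo hi]]]; exists v, u;
    by rewrite /level_point setUC !inE !ltrN2 in lo hi *.
by rewrite /slicing /slice_face (boolp.funext crossing_opp).
Qed.

Lemma below_opp : below f' (- x)%R = above f x.
Proof. by apply/setP=> w; rewrite !inE ltrN2. Qed.

Lemma above_opp : above f' (- x)%R = below f x.
Proof. by apply/setP=> w; rewrite !inE ltrN2. Qed.

Lemma low_ends_opp : low_ends K f' (- x)%R = high_ends K f x.
Proof.
rewrite /low_ends /high_ends slicing_opp below_opp above_opp; apply/setP=> w; rewrite !inE.
apply/existsP/existsP=> -[v /and3P[vS lo hi]]; exists v;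
  by rewrite /level_point setUC in vS; rewrite vS lo hi.
Qed.

Lemma high_ends_opp : high_ends K f' (- x)%R = low_ends K f x.
Proof.
rewrite /low_ends /high_ends slicing_opp below_opp above_opp; apply/setP=> w; rewrite !inE.
apply/existsP/existsP=> -[v /and3P[vS lo hi]]; exists v;
  by rewrite /level_point setUC in vS; rewrite vS lo hi.
Qed.

Lemma opp_neq : (forall v, f v != x) -> forall v, f' v != (- x)%R.
Proof. by move=> fNx v; rewrite eqr_opp. Qed.

End Opposite.

(** * The three target maps *)

Lemma cycle_face_boundaryP (W : finType) (L : seq (seq W)) G :
  reflect (exists2 s, s \in L & G = cycle_face s) (G \in [set F in map (@cycle_face _) L]).
Proof. by rewrite inE; apply: mapP. Qed.

Lemma eq_inord n (i : 'I_n.+1) k : k <= n -> (i == inord k) = (i == k :> nat).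
Proof. by move=> kn; rewrite -val_eqE /= inordK. Qed.

Lemma card_setC1P n (J : {set 'I_n.+1}) : #|J| = n -> exists k, J = [set~ k].
Proof.
move=> Jn; have /cards1P[k Jk] : #|~: J| == 1 by rewrite cardsCs setCK card_ord Jn subSnn.
by exists k; rewrite -Jk setCK.
Qed.

Lemma ord_setT2 : [set: 'I_2] = [set ord0; ord_max].
Proof. by apply/setP=> -[[|[|?]] ?]; rewrite !inE. Qed.


Lemma ord_setT4 : [set: 'I_4] = [set o4 0; o4 1; o4 2; o4 3].
Proof. by apply/setP=> i; rewrite !inE /o4 !eq_inord //; case: i => [[|[|[|[|?]]]] ?]. Qed.

Definition tetra_label (_ : 'I_1) (j : 'I_4) := j.

Lemma tetra_faces :
  [/\ cycle_face [:: o4 0; o4 1; o4 2] = rook_face tetra_label [set ord0] [set~ o4 3],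
      cycle_face [:: o4 0; o4 1; o4 3] = rook_face tetra_label [set ord0] [set~ o4 2],
      cycle_face [:: o4 0; o4 2; o4 3] = rook_face tetra_label [set ord0] [set~ o4 1] &
      cycle_face [:: o4 1; o4 2; o4 3] = rook_face tetra_label [set ord0] [set~ o4 0]].
Proof.
have C a b c k : [set~ o4 k] = [set o4 a; o4 b; o4 c] -> a != b -> b != c -> a != c ->
    a < 4 -> b < 4 -> c < 4 ->
    cycle_face [:: o4 a; o4 b; o4 c] = rook_face tetra_label [set ord0] [set~ o4 k].
  by move=> -> ab bc ac *; rewrite rook_face_line // /o4 eq_inord ?inordK.
by split; apply: C => //; apply/setP=> i; rewrite !inE /o4 !eq_inord //;
  case: i => [[|[|[|[|?]]]] ?].
Qed.

Lemma mem_tetra_boundary G : G \in tetra_boundary <->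
  exists I J, G = rook_face tetra_label I J /\ (#|I| == 1) && (#|J| == 3).
Proof.
have [F3 F2 F1 F0] := tetra_faces.
have cardC (k : 'I_4) : #|[set~ k]| == 3 by rewrite cardsC1 card_ord.
split.
  case/cycle_face_boundaryP=> s; rewrite !inE => /or4P[] /eqP-> ->; exists [set ord0].
  - by exists [set~ o4 3]; rewrite F3 cards1 cardC; split; first reflexivity.
  - by exists [set~ o4 2]; rewrite F2 cards1 cardC; split; first reflexivity.
  - by exists [set~ o4 1]; rewrite F1 cards1 cardC; split; first reflexivity.
  - by exists [set~ o4 0]; rewrite F0 cards1 cardC; split; first reflexivity.
case=> I [J [-> /andP[/cards1P[i ->] /eqP/card_setC1P[k ->]]]]; rewrite (ord1 i).
apply/cycle_face_boundaryP; have := in_setT k; rewrite ord_setT4.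
case/setUP=> [/setUP[/set2P[]|/set1P]|/set1P]->.
- by exists [:: o4 1; o4 2; o4 3]; [rewrite !inE eqxx ?orbT | rewrite F0; reflexivity].
- by exists [:: o4 0; o4 2; o4 3]; [rewrite !inE eqxx ?orbT | rewrite F1; reflexivity].
- by exists [:: o4 0; o4 1; o4 3]; [rewrite !inE eqxx ?orbT | rewrite F2; reflexivity].
- by exists [:: o4 0; o4 1; o4 2]; [rewrite !inE eqxx ?orbT | rewrite F3; reflexivity].
Qed.

Definition prism_label (r : 'I_2) (c : 'I_3) : 'I_6 := o6 (3 * r + c).

Lemma prism_label_inj r c r' c' : prism_label r c = prism_label r' c' -> r = r' /\ c = c'.
Proof.
have val_label a b : nat_of_ord (prism_label a b) = 3 * a + b.
  by rewrite /prism_label /o6 inordK //; have := ltn_ord a; have := ltn_ord b; lia.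
move=> /(congr1 val); rewrite /= !val_label => E.
have r2 := ltn_ord r; have c3 := ltn_ord c; have r2' := ltn_ord r'; have c3' := ltn_ord c'.
by split; apply: val_inj => /=; clear -E r2 c3 r2' c3'; lia.
Qed.

Local Notation c1 := (Ordinal (isT : 1 < 3)).

Lemma ord_setT3 : [set: 'I_3] = [set ord0; c1; ord_max].
Proof. by apply/setP=> -[[|[|[|?]]] ?]; rewrite !inE. Qed.

Lemma prism_faces :
  [/\ cycle_face [:: o6 0; o6 1; o6 2] = rook_face prism_label [set ord0] setT,
      cycle_face [:: o6 3; o6 4; o6 5] = rook_face prism_label [set ord_max] setT,
      cycle_face [:: o6 0; o6 1; o6 4; o6 3] = rook_face prism_label setT [set~ ord_max],
      cycle_face [:: o6 1; o6 2; o6 5; o6 4] = rook_face prism_label setT [set~ ord0] &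
      cycle_face [:: o6 2; o6 0; o6 3; o6 5] = rook_face prism_label setT [set~ c1]].
Proof.
have C2 : [set~ ord_max] = [set ord0; c1 : 'I_3] by apply/setP=> -[[|[|[|?]]] ?]; rewrite !inE.
have C0 : [set~ ord0] = [set c1; ord_max : 'I_3] by apply/setP=> -[[|[|[|?]]] ?]; rewrite !inE.
have C1 : [set~ c1] = [set ord_max; ord0 : 'I_3] by apply/setP=> -[[|[|[|?]]] ?]; rewrite !inE.
by rewrite ord_setT3 ord_setT2 C0 C1 C2 !rook_face_line ?rook_face_square.
Qed.

Lemma mem_prism_boundary G : G \in prism_boundary <->
  exists I J, G = rook_face prism_label I J /\
    ((#|I| == 1) && (#|J| == 3) || (#|I| == 2) && (#|J| == 2)).
Proof.
have [F0 F1 F2 F3 F4] := prism_faces.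
have cT2 : #|[set: 'I_2]| = 2 by rewrite cardsT card_ord.
have cT3 : #|[set: 'I_3]| = 3 by rewrite cardsT card_ord.
have cC (k : 'I_3) : #|[set~ k]| = 2 by rewrite cardsC1 card_ord.
split.
  case/cycle_face_boundaryP=> s; rewrite !inE.
  case/or4P=> [/eqP->|/eqP->|/eqP->|/orP[]/eqP->] ->.
  - by exists [set ord0], setT; rewrite F0 cards1 cT3; split; first reflexivity.
  - by exists [set ord_max], setT; rewrite F1 cards1 cT3; split; first reflexivity.
  - by exists setT, [set~ ord_max]; rewrite F2 cT2 cC orbT; split; first reflexivity.
  - by exists setT, [set~ ord0]; rewrite F3 cT2 cC orbT; split; first reflexivity.
  - by exists setT, [set~ c1]; rewrite F4 cT2 cC orbT; split; first reflexivity.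
case=> I [J [-> /orP[]/andP[/eqP cI /eqP cJ]]]; apply/cycle_face_boundaryP.
  have -> : J = setT by apply/eqP; rewrite eqEcard subsetT cT3 cJ.
  move/eqP/cards1P: cI => [r ->]; have := in_setT r; rewrite ord_setT2 => /set2P[]->.
  - by exists [:: o6 0; o6 1; o6 2]; [rewrite !inE eqxx | rewrite F0; reflexivity].
  - by exists [:: o6 3; o6 4; o6 5]; [rewrite !inE eqxx ?orbT | rewrite F1; reflexivity].
have -> : I = setT by apply/eqP; rewrite eqEcard subsetT cT2 cI.
have [k ->] := card_setC1P cJ; have := in_setT k; rewrite ord_setT3.
case/setUP=> [/set2P[]|/set1P]->.
- by exists [:: o6 1; o6 2; o6 5; o6 4]; [rewrite !inE eqxx ?orbT | rewrite F3; reflexivity].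
- by exists [:: o6 2; o6 0; o6 3; o6 5]; [rewrite !inE eqxx ?orbT | rewrite F4; reflexivity].
- by exists [:: o6 0; o6 1; o6 4; o6 3]; [rewrite !inE eqxx ?orbT | rewrite F2; reflexivity].
Qed.

Lemma ordS_neq (i : 'I_3) : i != ordS i.
Proof. by case: i => [[|[|[|?]]] ?]. Qed.

Lemma card2_ord3P (I : {set 'I_3}) : #|I| = 2 -> exists i, I = [set i; ordS i].
Proof.
case/card_setC1P=> k ->; exists (ordS k); apply/setP=> i; rewrite !inE.
by case: k => [[|[|[|?]]] ?] //; case: i => [[|[|[|?]]] ?].
Qed.

Lemma grid_face (i j : 'I_3) :
  cycle_face [:: (i, j); (ordS i, j); (ordS i, ordS j); (i, ordS j)] =
  rook_face pair [set i; ordS i] [set j; ordS j].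
Proof. by rewrite rook_faceC rook_face_square ?ordS_neq. Qed.

Lemma mem_grid_torus G : G \in grid_torus <->
  exists I J, G = rook_face pair I J /\ (#|I| == 2) && (#|J| == 2).
Proof.
split.
  case/imset2P=> i j _ _ ->; exists [set i; ordS i], [set j; ordS j].
  by rewrite grid_face !cards2 !ordS_neq; split; first reflexivity.
case=> I [J [-> /andP[/eqP/card2_ord3P[i ->] /eqP/card2_ord3P[j ->]]]].
by rewrite -grid_face; apply/imset2P; exists i j.
Qed.

(** * Classification *)

Section Classification.
Variables (R : realType) (V : finType) (K : {set {set V}}) (f : V -> R) (x : R).
Hypotheses (HK : comb_3manifold K) (fNx : forall v, f v != x).
Hypotheses (Spm : polyhedral_map (slicing K f x)) (Swn : weakly_neighborly (slicing K f x)).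

Local Notation S := (slicing K f x).
Local Notation B := (low_ends K f x).
Local Notation A := (high_ends K f x).
Local Notation f' := (fun v => - f v)%R.

Lemma card_high_ends_le3 : 1 < #|B| -> #|A| <= 3.
Proof.
move=> /card_gt1P[u1 [u2 [B1 B2 nu]]].
have Spm' : polyhedral_map (slicing K f' (- x)%R) by rewrite slicing_opp.
have Swn' : weakly_neighborly (slicing K f' (- x)%R) by rewrite slicing_opp.
have /set0Pn[v Av] : A != set0 by rewrite -low_ends_opp (low_ends_neq0 (opp_neq fNx) HK Spm').
have := card_low_ends_edge (opp_neq fNx) HK Spm' Swn' (u := v) (v1 := u1) (v2 := u2).
rewrite low_ends_opp high_ends_opp => /(_ Av B1 B2 nu).
by rewrite (cardsD1 v A) Av.
Qed.

Lemma card_high_ends_triangle v (X : {set V}) : v \in A -> X \subset B ->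
  rook_face level_point X [set v] \in S -> #|A| <= 2.
Proof.
have Spm' : polyhedral_map (slicing K f' (- x)%R) by rewrite slicing_opp.
have Swn' : weakly_neighborly (slicing K f' (- x)%R) by rewrite slicing_opp.
have := card_low_ends_triangle (opp_neq fNx) HK Spm' Swn' (u := v) (Y := X).
by rewrite low_ends_opp high_ends_opp slicing_opp rook_face_levelC.
Qed.

Lemma slicing_iso_tetra : #|B| = 1 -> comb_iso S tetra_boundary.
Proof.
move=> B1; have /cards1P[u Bu] : #|B| == 1 by rewrite B1.
apply: (comb_iso_slicing fNx HK (admissible := fun m n => (m == 1) && (n == 3)) B1
  (card_high_ends_one_low fNx HK Spm Swn Bu) _ _ mem_tetra_boundary).
  by move=> a b a' b'; rewrite /tetra_label (ord1 a) (ord1 a') => ->.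
move=> X Y sX sY; apply/idP/andP.
  case/(slicing_face_card fNx HK sX sY) => Xn _ XY4.
  have X1 : #|X| <= 1 by rewrite -B1 subset_leq_card.
  have X0 : 0 < #|X| by rewrite card_gt0.
  by split; apply/eqP; clear -XY4 X1 X0; lia.
case=> /eqP X1 /eqP Y3.
have -> : X = B by apply: subset_card_eq sX _; rewrite B1 X1.
exact (triangle_one_low fNx HK Spm Swn Bu sY Y3).
Qed.

Lemma slicing_iso_prism : #|B| = 2 -> #|A| = 3 -> comb_iso S prism_boundary.
Proof.
move=> B2 A3.
apply: (comb_iso_slicing fNx HK (h := prism_label)
  (admissible := fun m n => (m == 1) && (n == 3) || (m == 2) && (n == 2)) B2 A3
  prism_label_inj _ mem_prism_boundary).
move=> X Y sX sY; apply/idP/idP.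
  case/(slicing_face_card fNx HK sX sY) => Xn _ XY4.
  have X2 : #|X| <= 2 by rewrite -B2 subset_leq_card.
  have X0 : 0 < #|X| by rewrite card_gt0.
  have [X1|X2'] : #|X| = 1 \/ #|X| = 2 by clear -X2 X0; lia.
    by rewrite X1 (_ : #|Y| = 3) //; clear -XY4 X1; lia.
  by rewrite X2' (_ : #|Y| = 2) ?orbT //; clear -XY4 X2'; lia.
case/orP=> /andP[/eqP X1 /eqP Y2]; last exact: square_face_card.
have /cards1P[u Xu] : #|X| == 1 by rewrite X1.
have -> : Y = A by apply: subset_card_eq sY _; rewrite A3 Y2.
have Bu : u \in B by apply: (subsetP sX); rewrite Xu set11.
by rewrite Xu; exact (prism_triangle fNx HK Spm Swn B2 A3 Bu).
Qed.

Lemma slicing_iso_torus : #|B| = 3 -> #|A| = 3 -> comb_iso S grid_torus.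
Proof.
move=> B3 A3.
apply: (comb_iso_slicing fNx HK (h := pair) (admissible := fun m n => (m == 2) && (n == 2))
  B3 A3 _ _ mem_grid_torus); first by move=> a b a' b' [-> ->].
move=> X Y sX sY; apply/idP/andP; last by case=> /eqP X2 /eqP Y2; exact: square_face_card.
move=> FS; have [Xn Yn XY4] := slicing_face_card fNx HK sX sY FS.
have X3 : #|X| <= 3 by rewrite -B3 subset_leq_card.
have Y3 : #|Y| <= 3 by rewrite -A3 subset_leq_card.
have X0 : 0 < #|X| by rewrite card_gt0.
have Y0 : 0 < #|Y| by rewrite card_gt0.
have XN1 : #|X| != 1.
  apply/negP=> /cards1P[u Xu].
  have Bu : u \in B by apply: (subsetP sX); rewrite Xu set11.
  by have := card_low_ends_triangle fNx HK Spm Swn Bu sY; rewrite -Xu B3 => /(_ FS).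
have YN1 : #|Y| != 1.
  apply/negP=> /cards1P[v Yv].
  have Av : v \in A by apply: (subsetP sY); rewrite Yv set11.
  by have := card_high_ends_triangle Av sX; rewrite -Yv A3 => /(_ FS).
by move/eqP: XN1 => XN1; move/eqP: YN1 => YN1; split; apply/eqP;
  clear -XY4 X3 Y3 X0 Y0 XN1 YN1; lia.
Qed.

Lemma slicing_classification_le : #|B| <= #|A| ->
  [\/ comb_iso S tetra_boundary, comb_iso S prism_boundary | comb_iso S grid_torus].
Proof.
move=> BA; have ge5 := card_ends_ge5 fNx HK Spm.
have B0 : 0 < #|B| by rewrite card_gt0 (low_ends_neq0 fNx HK Spm).
have [B1|B2] := leqP #|B| 1.
  by apply: Or31; apply: slicing_iso_tetra; clear -B0 B1; lia.
have A3 := card_high_ends_le3 B2.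
have [B2'|B3] : #|B| = 2 \/ #|B| = 3 by clear -BA A3 B2; lia.
  by apply: Or32; apply: slicing_iso_prism => //; clear -ge5 A3 B2'; lia.
by apply: Or33; apply: slicing_iso_torus => //; clear -BA A3 B3; lia.
Qed.

End Classification.

Local Open Scope ring_scope.

Theorem theorem5p5 (R : realType) (V : finType) (K : {set {set V}})
  (f : V -> R) (x : R) :
  comb_3manifold K ->
  rsl f ->
  (forall v, f v != x) ->
  polyhedral_map (slicing K f x) ->
  weakly_neighborly (slicing K f x) ->
  comb_iso (slicing K f x) tetra_boundary \/
  comb_iso (slicing K f x) prism_boundary \/
  comb_iso (slicing K f x) grid_torus.
Proof.
move=> HK _ fNx Spm Swn.
have [BA|AB] := leqP #|low_ends K f x| #|high_ends K f x|.
  by case: (slicing_classification_le HK fNx Spm Swn BA); tauto.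
have Spm' : polyhedral_map (slicing K (fun v => - f v) (- x)) by rewrite slicing_opp.
have Swn' : weakly_neighborly (slicing K (fun v => - f v) (- x)) by rewrite slicing_opp.
have := slicing_classification_le HK (opp_neq fNx) Spm' Swn'.
rewrite low_ends_opp high_ends_opp slicing_opp => /(_ (ltnW AB)).
by case; tauto.
Qed.
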